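(* Let $f:\mathbb{R}^n\to\mathbb{R}$ be convex and $L$-smooth ($L>0$), let $h:\mathbb{R}^n\to(-\infty,+\infty]$ be proper, closed and convex with $\mathrm{dom}\, h\subset \mathrm{dom}\, f$, let $\phi=f+h$, and assume $\phi$ attains its minimum $\phi_*$. Let $w_0\in\mathrm{dom}\, h$ and let $d_0$ be the distance from $w_0$ to the set of minimizers of $\phi$. Given $\bar\varepsilon>0$, assume the stepsize $\lambda$ satisfies $1/L\le\lambda\le d_0^2/\bar\varepsilon$. Then the total number of ACG iterations performed by the Restart ACG method (described in the context) until it produces an iterate $w_k$ with $\phi(w_k)-\phi_*\le\bar\varepsilon$ is $\mathcal{O}(\sqrt{L}\,d_0/\sqrt{\bar\varepsilon})$, i.e., bounded by an absolute constant times $\sqrt{L}\,d_0/\sqrt{\bar\varepsilon}$.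
   Context: For $\varepsilon\ge0$ and convex $\phi$, $\partial_\varepsilon\phi(x)=\{s: \phi(y)\ge\phi(x)+\langle s,y-x\rangle-\varepsilon\ \forall y\}$. For a differentiable $g$, $\ell_g(u;x)=g(x)+\langle\nabla g(x),u-x\rangle$. ACG subroutine (for $\min\psi=g+h$ with $g$ $\mu$-strongly convex and $(L+\mu)$-smooth): given $x_0$, set $A_0=0$, $\tau_0=1/L$, $y_0=x_0$; for $j=0,1,\dots$: $a_j=\frac{\tau_j+\sqrt{\tau_j^2+4\tau_jA_j}}{2}$, $\tau_{j+1}=\tau_j+\mu a_j/L$, $A_{j+1}=A_j+a_j$, $\tilde x_j=\frac{A_j}{A_{j+1}}y_j+\frac{a_j}{A_{j+1}}x_j$; $\tilde y_{j+1}=\mathrm{argmin}_u\{\ell_g(u;\tilde x_j)+h(u)+\frac{L+\mu}{2}\|u-\tilde x_j\|^2\}$; $y_{j+1}\in\mathrm{Argmin}\{\psi(u):u\in\{y_j,\tilde y_{j+1}\}\}$; $x_{j+1}=\frac{(L+\mu)a_j\tilde y_{j+1}-\frac{A_ja_jL}{A_{j+1}}y_j}{A_{j+1}\mu+1}$. Also define $\tilde\gamma_j(u)=\ell_g(u;\tilde x_j)+h(u)+\frac{\mu}{2}\|u-\tilde x_j\|^2$, $\gamma_j(u)=\tilde\gamma_j(\tilde y_{j+1})+L\langle\tilde x_j-\tilde y_{j+1},u-\tilde y_{j+1}\rangle+\frac{\mu}{2}\|u-\tilde y_{j+1}\|^2$, $\Gamma_0\equiv0$, $\Gamma_{j+1}=(A_j\Gamma_j+a_j\gamma_j)/A_{j+1}$.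 Restart ACG (stepsize $\lambda>0$): set $z_0=w_0$, $B_0=0$. For $k=1,2,\dots$: (1) $b_k=\frac{\lambda+\sqrt{\lambda^2+4\lambda B_{k-1}}}{2}$, $B_k=B_{k-1}+b_k$, $\tilde z_k=\frac{B_{k-1}}{B_k}w_{k-1}+\frac{b_k}{B_k}z_{k-1}$. (2) Run ACG with $x_0=\tilde z_k$, $g=f+\frac{1}{2\lambda}\|\cdot-\tilde z_k\|^2$, $\mu=1/\lambda$, $\psi=\phi+\frac1{2\lambda}\|\cdot-\tilde z_k\|^2$; at each ACG iteration $j\ge1$ form $\hat v_j=\frac{x_0-x_j}{A_j}+\frac{x_0-x_j}{\lambda}$, $\phi_j=\Gamma_j-\frac1{2\lambda}\|\cdot-x_0\|^2$, $\varepsilon_j=\phi(y_j)-\phi_j(x_j)-\langle\hat v_j,y_j-x_j\rangle$, and stop at the first $j$ for which the triple $(\tilde w_k,u_k,\eta_k)=(y_j,\hat v_j,\varepsilon_j)$ satisfies $u_k\in\partial_{\eta_k}\phi(\tilde w_k)$ and $\|\lambda u_k+\tilde w_k-\tilde z_k\|^2+2\lambda\eta_k\le 0.9\|\tilde z_k-\tilde w_k\|^2$. (3) $z_k=z_{k-1}-b_ku_k$, $w_k\in\mathrm{Argmin}\{\phi(u):u\in\{w_{k-1},\tilde w_k\}\}$. The total iteration count is the sum over $k$ of the ACG iterations used in step (2). *)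

From HB Require Import structures.
From mathcomp Require Import all_boot all_order all_algebra.
From mathcomp Require Import classical_sets reals constructive_ereal.
Set Implicit Arguments. Unset Strict Implicit. Unset Printing Implicit Defensive.
Import Order.TTheory GRing.Theory Num.Theory.
Local Open Scope ring_scope.

Section Defs.
Variables (R : realType) (n : nat).
Local Notation vec := 'rV[R]_n.

Definition dot (u v : vec) : R := \sum_(i < n) u ord0 i * v ord0 i.
Definition vnorm (u : vec) : R := Num.sqrt (dot u u).

Definition rconvex (f : vec -> R) : Prop :=
  forall x y (t : R), 0 <= t -> t <= 1 ->
    f (t *: x + (1 - t) *: y) <= t * f x + (1 - t) * f y.

Definition is_gradient (f : vec -> R) (gf : vec -> vec) : Prop :=
  forall x (e : R), 0 < e -> exists d : R, 0 < d /\
    forall y, vnorm (y - x) < d ->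
      `|f y - f x - dot (gf x) (y - x)| <= e * vnorm (y - x).

Definition L_smooth (f : vec -> R) (gf : vec -> vec) (L : R) : Prop :=
  is_gradient f gf /\ forall x y, vnorm (gf x - gf y) <= L * vnorm (x - y).

Definition eproper (h : vec -> \bar R) : Prop :=
  (forall x, h x != -oo%E) /\ exists x, (h x < +oo)%E.

(* closed = lower semicontinuous *)
Definition eclosed (h : vec -> \bar R) : Prop :=
  forall x (c : R), (c%:E < h x)%E ->
    exists d : R, 0 < d /\ forall y, vnorm (y - x) < d -> (c%:E < h y)%E.

Definition econvex (h : vec -> \bar R) : Prop :=
  forall x y (t : R), 0 < t -> t < 1 ->
    (h (t *: x + (1 - t) *: y)%R <= t%:E * h x + (1 - t)%:E * h y)%E.

Definition edom (h : vec -> \bar R) (x : vec) : Prop := (h x < +oo)%E.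

Definition phi_of (f : vec -> R) (h : vec -> \bar R) (x : vec) : \bar R :=
  ((f x)%:E + h x)%E.

Definition minimizers (phi : vec -> \bar R) : set vec :=
  fun x => forall y, (phi x <= phi y)%E.
Definition dist_to (S : set vec) (x : vec) : R :=
  inf (fun r : R => exists2 y, S y & r = vnorm (x - y)).

Definition esubdiff (phi : vec -> \bar R) (x s : vec) (eps : \bar R) : Prop :=
  (0 <= eps)%E /\
  forall y, (phi x + (dot s (y - x))%:E - eps <= phi y)%E.

Definition lin (g : vec -> R) (gg : vec -> vec) (x u : vec) : R :=
  g x + dot (gg x) (u - x).

(* the sequences generated by ACG; syt (j+1) stores \tilde y_{j+1} *)
Record acg_seq := ACGSeq {
  sA : nat -> R; sa : nat -> R; stau : nat -> R;
  sx : nat -> vec; sy : nat -> vec; sxt : nat -> vec; syt : nat -> vec }.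

(* s is a run of the first J iterations (j = 0..J-1) of ACG for
   min psi = g + h, with g mu-strongly convex and (L+mu)-smooth, started at x0 *)
Definition acg_trace (g : vec -> R) (gg : vec -> vec) (h : vec -> \bar R)
    (mu L : R) (x0 : vec) (s : acg_seq) (J : nat) : Prop :=
  let psi u := ((g u)%:E + h u)%E in
  sA s 0 = 0 /\ stau s 0 = 1 / L /\ sy s 0 = x0 /\ sx s 0 = x0 /\
  forall j, (j < J)%N ->
    [/\ [/\ sa s j = (stau s j + Num.sqrt (stau s j ^+ 2 + 4 * stau s j * sA s j)) / 2,
        stau s j.+1 = stau s j + mu * sa s j / L &
        sA s j.+1 = sA s j + sa s j],
        sxt s j = (sA s j / sA s j.+1) *: sy s j + (sa s j / sA s j.+1) *: sx s j,
        (forall u,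
          ((lin g gg (sxt s j) (syt s j.+1))%:E + h (syt s j.+1)
             + ((L + mu) / 2 * vnorm (syt s j.+1 - sxt s j) ^+ 2)%:E
           <= (lin g gg (sxt s j) u)%:E + h u
             + ((L + mu) / 2 * vnorm (u - sxt s j) ^+ 2)%:E)%E),
        (sy s j.+1 = sy s j \/ sy s j.+1 = syt s j.+1)
          /\ (psi (sy s j.+1) <= psi (sy s j))%E
          /\ (psi (sy s j.+1) <= psi (syt s j.+1))%E &
        sx s j.+1 = (1 / (sA s j.+1 * mu + 1)) *:
           (((L + mu) * sa s j) *: syt s j.+1
              - (sA s j * sa s j * L / sA s j.+1) *: sy s j)].

Definition gamt (g : vec -> R) (gg : vec -> vec) (h : vec -> \bar R) (mu : R)
    (s : acg_seq) (j : nat) (u : vec) : \bar R :=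
  ((lin g gg (sxt s j) u)%:E + h u + (mu / 2 * vnorm (u - sxt s j) ^+ 2)%:E)%E.

Definition gam (g : vec -> R) (gg : vec -> vec) (h : vec -> \bar R) (mu L : R)
    (s : acg_seq) (j : nat) (u : vec) : \bar R :=
  (gamt g gg h mu s j (syt s j.+1)
   + (L * dot (sxt s j - syt s j.+1) (u - syt s j.+1)
      + mu / 2 * vnorm (u - syt s j.+1) ^+ 2)%:E)%E.

Fixpoint Gam (g : vec -> R) (gg : vec -> vec) (h : vec -> \bar R) (mu L : R)
    (s : acg_seq) (j : nat) (u : vec) : \bar R :=
  match j with
  | 0 => 0%E
  | j'.+1 => (((sA s j')%:E * Gam g gg h mu L s j' u
               + (sa s j')%:E * gam g gg h mu L s j' u) * (1 / sA s j)%:E)%E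
  end.

(* Restart ACG, step (2): the ACG instance of stage k with prox center zt *)
Definition stage_g (f : vec -> R) (lam : R) (zt : vec) (u : vec) : R :=
  f u + 1 / (2 * lam) * vnorm (u - zt) ^+ 2.
Definition stage_gg (gf : vec -> vec) (lam : R) (zt : vec) (u : vec) : vec :=
  gf u + (1 / lam) *: (u - zt).

Definition vhat (lam : R) (zt : vec) (s : acg_seq) (j : nat) : vec :=
  (1 / sA s j) *: (zt - sx s j) + (1 / lam) *: (zt - sx s j).

Definition eps_j (f : vec -> R) (gf : vec -> vec) (h : vec -> \bar R) (L lam : R)
    (zt : vec) (s : acg_seq) (j : nat) : \bar R :=
  let phij u := (Gam (stage_g f lam zt) (stage_gg gf lam zt) h (1 / lam) L s j u
                 - (1 / (2 * lam) * vnorm (u - zt) ^+ 2)%:E)%E in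
  (phi_of f h (sy s j) - phij (sx s j) - (dot (vhat lam zt s j) (sy s j - sx s j))%:E)%E.

Definition restart_crit (f : vec -> R) (h : vec -> \bar R) (lam : R) (zt : vec)
    (wt u : vec) (eta : \bar R) : Prop :=
  esubdiff (phi_of f h) wt u eta /\
  ((vnorm (lam *: u + wt - zt) ^+ 2)%:E + (2 * lam)%:E * eta
     <= ((9%:R / 10%:R) * vnorm (zt - wt) ^+ 2)%:E)%E.

Definition crit_at f gf h L lam zt s j : Prop :=
  restart_crit f h lam zt (sy s j) (vhat lam zt s j) (eps_j f gf h L lam zt s j).

Definition stage_done f gf h (L lam : R) (zt : vec) (s : acg_seq) (m : nat)
    (wt u : vec) (eta : \bar R) : Prop :=
  [/\ acg_trace (stage_g f lam zt) (stage_gg gf lam zt) h (1 / lam) L zt s m,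
      (1 <= m)%N, crit_at f gf h L lam zt s m,
      (forall j, (1 <= j)%N -> (j < m)%N -> ~ crit_at f gf h L lam zt s j) &
      [/\ wt = sy s m, u = vhat lam zt s m & eta = eps_j f gf h L lam zt s m]].

Definition stage_partial f gf h (L lam : R) (zt : vec) (s : acg_seq) (J : nat) : Prop :=
  acg_trace (stage_g f lam zt) (stage_gg gf lam zt) h (1 / lam) L zt s J /\
  (forall j, (1 <= j)%N -> (j < J)%N -> ~ crit_at f gf h L lam zt s j).

(* An execution prefix of Restart ACG: outer iterations k = 1..K completed
   (stage k used m k ACG iterations), and stage K+1 in progress with J ACG
   iterations performed. *)
Definition restart_prefix f gf h (L lam : R) (w0 : vec)
    (z w zt wt u : nat -> vec) (b B : nat -> R) (eta : nat -> \bar R)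
    (m : nat -> nat) (s : nat -> acg_seq) (K J : nat) : Prop :=
  [/\ [/\ z 0 = w0, w 0 = w0 & B 0 = 0],
      (forall k, (1 <= k)%N -> (k <= K.+1)%N ->
        [/\ b k = (lam + Num.sqrt (lam ^+ 2 + 4 * lam * B k.-1)) / 2,
            B k = B k.-1 + b k &
            zt k = (B k.-1 / B k) *: w k.-1 + (b k / B k) *: z k.-1]),
      (forall k, (1 <= k)%N -> (k <= K)%N ->
        [/\ stage_done f gf h L lam (zt k) (s k) (m k) (wt k) (u k) (eta k),
            z k = z k.-1 - b k *: u k &
            (w k = w k.-1 \/ w k = wt k)
              /\ (phi_of f h (w k) <= phi_of f h (w k.-1))%E
              /\ (phi_of f h (w k) <= phi_of f h (wt k))%E]) &
      stage_partial f gf h L lam (zt K.+1) (s K.+1) J].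

End Defs.

(* Restart ACG is an accelerated inexact proximal point method.  For the outer
   loop, the relative-error stopping criterion makes the estimate-sequence
   potential B_k (phi(w_k) - phi_* ) + |z_k - x_*|^2 / 2 nonincreasing, while
   B_k >= k^2 lam / 4; hence phi(w_k) - phi_* > eps for k <= K forces
   K^2 lam eps <= 2 d0^2.  Each prox subproblem is (1/lam)-strongly convex and
   (L + 1/lam)-smooth, and the ACG estimate sequence gives
   A_j psi(y_j) <= A_j Gamma_j(x_j) + |x_j - x_0|^2 / 2 with A_j >= j^2 / (4 L);
   the affine function Gamma_j - |. - x_0|^2 / (2 lam) has slope v_j and
   certifies v_j in the eps_j-subdifferential, and as soon as A_j >= 6 lam the
   criterion holds.  So every stage stops within 6 sqrt(lam L) iterations, and
   with 1/L <= lam <= d0^2 / eps the total is at most 15 sqrt(L) d0 / sqrt(eps). *)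

From HB Require Import structures.
From mathcomp Require Import all_boot all_order all_algebra.
From mathcomp Require Import classical_sets reals constructive_ereal.
From mathcomp Require Import lra ring.
Import Order.TTheory GRing.Theory Num.Theory.
Local Open Scope ring_scope.
Set Implicit Arguments. Unset Strict Implicit. Unset Printing Implicit Defensive.

Section Inner.
Variables (R : realType) (n : nat).
Local Notation vec := 'rV[R]_n.
Implicit Types (u v w p : vec) (a : R).

Lemma dotC u v : dot u v = dot v u.
Proof. by apply: eq_bigr => i _; rewrite mulrC. Qed.

Lemma dotDl u v w : dot (u + v) w = dot u w + dot v w.
Proof. by rewrite /dot -big_split; apply: eq_bigr => i _; rewrite mxE mulrDl. Qed.

Lemma dotZl a u v : dot (a *: u) v = a * dot u v.
Proof. by rewrite /dot mulr_sumr; apply: eq_bigr => i _; rewrite mxE mulrA. Qed.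

Lemma dotNl u v : dot (- u) v = - dot u v.
Proof. by rewrite -scaleN1r dotZl mulN1r. Qed.

Lemma dotBl u v w : dot (u - v) w = dot u w - dot v w.
Proof. by rewrite dotDl dotNl. Qed.

Lemma dotDr u v w : dot w (u + v) = dot w u + dot w v.
Proof. by rewrite dotC dotDl !(dotC w). Qed.

Lemma dotZr a u v : dot v (a *: u) = a * dot v u.
Proof. by rewrite dotC dotZl dotC. Qed.

Lemma dotNr u v : dot v (- u) = - dot v u.
Proof. by rewrite dotC dotNl dotC. Qed.

Lemma dotBr u v w : dot w (u - v) = dot w u - dot w v.
Proof. by rewrite dotDr dotNr. Qed.

Lemma dot0l u : dot 0 u = 0.
Proof. by rewrite -(scale0r 0) dotZl mul0r. Qed.

Lemma dot_ge0 u : 0 <= dot u u.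
Proof. by apply: sumr_ge0 => i _; rewrite -expr2 sqr_ge0. Qed.

Lemma dot_eq0 u : dot u u = 0 -> u = 0.
Proof.
move=> /eqP; rewrite psumr_eq0 => [/allP u0|i _]; last by rewrite -expr2 sqr_ge0.
apply/rowP => i; rewrite mxE; apply/eqP.
by rewrite -[_ == 0]orbb -mulf_eq0; apply: (implyP (u0 _ (mem_index_enum _))).
Qed.

Lemma vnorm_ge0 u : 0 <= vnorm u.
Proof. exact: sqrtr_ge0. Qed.

Lemma vnorm2 u : vnorm u ^+ 2 = dot u u.
Proof. by rewrite sqr_sqrtr // dot_ge0. Qed.

Lemma vnorm_gt0 u : u != 0 -> 0 < vnorm u.
Proof.
move=> u0; rewrite sqrtr_gt0 lt_def dot_ge0 andbT.
by apply: contra u0 => /eqP/dot_eq0->.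
Qed.

Lemma vnormZ a u : vnorm (a *: u) = `|a| * vnorm u.
Proof. by rewrite /vnorm dotZl dotZr mulrA -expr2 sqrtrM ?sqr_ge0 // sqrtr_sqr. Qed.

Lemma dot_comb a b u v :
  dot (a *: u + b *: v) (a *: u + b *: v)
  = a ^+ 2 * dot u u + 2 * a * b * dot u v + b ^+ 2 * dot v v.
Proof. by rewrite !dotDl !dotDr !dotZl !dotZr (dotC v u); ring. Qed.

Lemma dot_sub_sqr u v : dot (u - v) (u - v) = dot u u - 2 * dot u v + dot v v.
Proof.
have -> : u - v = 1 *: u + (-1) *: v by rewrite scale1r scaleN1r.
by rewrite dot_comb; ring.
Qed.

Lemma dot_three_point u v p :
  dot (u - p) (u - p) = dot (v - p) (v - p) + 2 * dot (v - p) (u - v) + dot (u - v) (u - v).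
Proof.
have -> : u - p = 1 *: (v - p) + 1 *: (u - v) by apply/rowP => i; rewrite !mxE; ring.
by rewrite dot_comb (dotC (v - p)); ring.
Qed.

Lemma quad_sum_recenter a b (p q e v u : vec) :
  (a + b) *: v = a *: p + b *: q - e ->
  a / 2 * dot (u - p) (u - p) + b / 2 * dot (u - q) (u - q) + dot e (u - q)
  = a / 2 * dot (v - p) (v - p) + b / 2 * dot (v - q) (v - q) + dot e (v - q)
    + (a + b) / 2 * dot (u - v) (u - v).
Proof.
move=> vE; have uq : u - q = (v - q) + (u - v) by apply/rowP => i; rewrite !mxE; ring.
have cross : a * dot (v - p) (u - v) + b * dot (v - q) (u - v) + dot e (u - v) = 0.
  rewrite -!dotZl -!dotDl.
  have -> : a *: (v - p) + b *: (v - q) + e = (a + b) *: v - (a *: p + b *: q - e).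
    by apply/rowP => i; rewrite !mxE; ring.
  by rewrite vE subrr dot0l.
rewrite (dot_three_point u v p) (dot_three_point u v q) uq (dotDr _ _ e); lra.
Qed.

Lemma cauchy_schwarz u v : dot u v <= vnorm u * vnorm v.
Proof.
have [->|u0] := eqVneq u 0; first by rewrite dot0l mulr_ge0 ?vnorm_ge0.
have [->|v0] := eqVneq v 0; first by rewrite dotC dot0l mulr_ge0 ?vnorm_ge0.
have ab0 : 0 < vnorm u * vnorm v by rewrite mulr_gt0 ?vnorm_gt0.
have := dot_ge0 (vnorm v *: u + (- vnorm u) *: v).
rewrite dot_comb -!vnorm2 => sq0.
suff : 0 <= vnorm u * vnorm v * (vnorm u * vnorm v - dot u v) by rewrite pmulr_rge0 // subr_ge0.
lra.
Qed.
End Inner.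

Lemma le_of_le_addVn (R : realType) (a b c : R) :
  (forall N : nat, a <= b + c / N.+1%:R) -> a <= b.
Proof.
move=> H; apply/ler_addgt0Pr => e e0.
have [N ltN] : exists N : nat, c / e < N.+1%:R.
  exists (Num.Def.archi_bound `|c / e|); apply: le_lt_trans (ler_norm _) _.
  by apply: lt_trans (archi_boundP (normr_ge0 _)) _; rewrite ltr_nat.
apply: le_trans (H N) _; rewrite lerD2l ler_pdivrMr // mulrC -ler_pdivrMr //.
exact: ltW.
Qed.

Section Gradient.
Variables (R : realType) (n : nat).
Local Notation vec := 'rV[R]_n.
Variables (f : vec -> R) (gf : vec -> vec).
Hypotheses (fconv : rconvex f) (fgrad : is_gradient f gf).

Lemma gradient_ineq x y : f x + dot (gf x) (y - x) <= f y.
Proof.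
set d := y - x; have d0 := vnorm_ge0 d.
suff slope e : 0 < e -> dot (gf x) d - e * vnorm d <= f y - f x.
  apply/ler_addgt0Pr => e e0.
  have e1 : 0 < vnorm d + 1 by lra.
  have := slope _ (divr_gt0 e0 e1).
  have : e / (vnorm d + 1) * vnorm d <= e.
    by rewrite mulrAC ler_pdivrMr // ler_wpM2l ?(ltW e0) //; lra.
  lra.
move=> e0; have [del [del0 Hdel]] := fgrad x e0.
pose t := Num.min (1 / 2) (del / (2 * (vnorm d + 1))).
have t0 : 0 < t by rewrite lt_min; apply/andP; split; [lra | apply: divr_gt0; lra].
have t1 : t <= 1 / 2 by rewrite ge_min lexx.
have tdel : t * (2 * (vnorm d + 1)) <= del.
  by rewrite -ler_pdivlMr ?ge_min ?lexx ?orbT //; lra.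
have px : (x + t *: d) - x = t *: d by rewrite addrC addKr.
have conv := fconv y x (ltW t0) ltac:(lra).
have cvx_pt : t *: y + (1 - t) *: x = x + t *: d.
  by apply/rowP => i; rewrite /d !mxE; ring.
rewrite cvx_pt in conv.
have := Hdel (x + t *: d); rewrite px vnormZ ger0_norm ?(ltW t0) // dotZr.
have : t * vnorm d < t * (2 * (vnorm d + 1)) by rewrite ltr_pM2l //; lra.
move=> lt_del /(_ (lt_le_trans lt_del tdel)) /ler_normlP [lin_lb _].
suff : t * (dot (gf x) d - e * vnorm d) <= t * (f y - f x) by rewrite ler_pM2l.
lra.
Qed.

Variable L : R.
Hypothesis gf_lip : forall x y, vnorm (gf x - gf y) <= L * vnorm (x - y).

Lemma descent_steps x y (t : R) (k : nat) : 0 < t ->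
  f (x + (k%:R * t) *: (y - x)) - f x
  <= k%:R * t * dot (gf x) (y - x) + L * dot (y - x) (y - x) * t ^+ 2 * (k%:R * k.+1%:R) / 2.
Proof.
move=> t0; set d := y - x; elim: k => [|k IH]; first by rewrite !mul0r scale0r addr0; lra.
set p := x + (k%:R * t) *: d; set q := x + (k.+1%:R * t) *: d.
have qp : p - q = (- t) *: d by apply/rowP => i; rewrite !mxE -natr1; ring.
have qx : q - x = (k.+1%:R * t) *: d by rewrite addrC addKr.
have step := gradient_ineq q p; rewrite qp dotZr in step.
have lip : dot (gf q - gf x) d <= L * (k.+1%:R * t * vnorm d) * vnorm d.
  apply: le_trans (cauchy_schwarz _ _) _; apply: ler_wpM2r; first exact: vnorm_ge0.
  by apply: le_trans (gf_lip q x) _; rewrite qx vnormZ ger0_norm // mulr_ge0 // ltW.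
have lipE : L * (k.+1%:R * t * vnorm d) * vnorm d = L * k.+1%:R * t * dot d d.
  by rewrite -vnorm2; ring.
rewrite lipE dotBl in lip.
have tlip : t * (dot (gf q) d - dot (gf x) d) <= t * (L * k.+1%:R * t * dot d d).
  by rewrite ler_pM2l //; lra.
have -> : k.+1%:R * t * dot (gf x) d + L * dot d d * t ^+ 2 * (k.+1%:R * k.+2%:R) / 2
    = k%:R * t * dot (gf x) d + L * dot d d * t ^+ 2 * (k%:R * k.+1%:R) / 2
      + t * dot (gf x) d + t * (L * k.+1%:R * t * dot d d).
  by rewrite -[k.+2%:R]natr1 -[k.+1%:R]natr1; field.
move: IH; rewrite -/p; lra.
Qed.

Lemma descent x y : f y <= f x + dot (gf x) (y - x) + L / 2 * dot (y - x) (y - x).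
Proof.
apply: (@le_of_le_addVn _ _ _ (L / 2 * dot (y - x) (y - x))) => N.
have tN : 0 < N.+1%:R^-1 :> R by rewrite invr_gt0.
have := descent_steps x y N.+1 tN.
rewrite divff ?pnatr_eq0 // scale1r addrCA subrr addr0.
rewrite -[N.+2%:R]natr1.
set M := N.+1%:R; set Q := dot (y - x) (y - x) => H.
have : L * Q * M^-1 ^+ 2 * (M * (M + 1)) / 2 = L / 2 * Q + L / 2 * Q / M.
  by field; rewrite addrC natr1 pnatr_eq0.
by move=> E; rewrite E mul1r lerBlDl !addrA in H.
Qed.
End Gradient.

Section QuadRoot.
Variable R : realType.
Implicit Types (t A a c : R).

Lemma quad_root_spec t A : 0 < t -> 0 <= A ->
  let a := (t + Num.sqrt (t ^+ 2 + 4 * t * A)) / 2 in 0 < a /\ a ^+ 2 = t * (A + a).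
Proof.
move=> t0 A0 a; have disc0 : 0 <= t ^+ 2 + 4 * t * A by nra.
have := sqr_sqrtr disc0; have := sqrtr_ge0 (t ^+ 2 + 4 * t * A).
rewrite /a; set r := Num.sqrt _ => r0 r2; split; [lra | nra].
Qed.

Lemma quad_root_ge t A a c : 0 < t -> 0 < a -> a ^+ 2 = t * (A + a) ->
  0 <= c -> c ^+ 2 <= t * A -> t / 2 + c <= a.
Proof.
move=> t0 a0 aE c0 cA; rewrite leNgt; apply/negP => lt_a.
have : c ^+ 2 + t ^+ 2 / 4 <= (a - t / 2) ^+ 2 by nra.
have [le_ta|lt_at] := lerP (t / 2) a; nra.
Qed.

Lemma quad_root_sum_growth t (A tau : nat -> R) (K : nat) : 0 < t -> A 0 = 0 ->
  (forall k, (k < K)%N -> t <= tau k /\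
     A k.+1 = A k + (tau k + Num.sqrt (tau k ^+ 2 + 4 * tau k * A k)) / 2) ->
  forall k, (k <= K)%N -> k%:R ^+ 2 * t / 4 <= A k.
Proof.
move=> t0 A0 HA; elim=> [|k IH] kK; first by rewrite A0 expr0n /= !mul0r.
have {}IH := IH (ltnW kK); have [tk AS] := HA k kK.
have lb0 : 0 <= k%:R ^+ 2 * t / 4 by rewrite divr_ge0 ?mulr_ge0 ?sqr_ge0 //; lra.
have Ak0 : 0 <= A k := le_trans lb0 IH.
have [a0 aE] := quad_root_spec (lt_le_trans t0 tk) Ak0.
have c0 : 0 <= k%:R * t / 2 by rewrite divr_ge0 ?mulr_ge0 //; lra.
have cA : (k%:R * t / 2) ^+ 2 <= tau k * A k.
  have -> : (k%:R * t / 2) ^+ 2 = t * (k%:R ^+ 2 * t / 4) by field.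
  by apply: ler_pM => //; exact: ltW.
have := quad_root_ge (lt_le_trans t0 tk) a0 aE c0 cA.
rewrite AS -[k.+1%:R]natr1; nra.
Qed.
End QuadRoot.

Section ExtendedValued.
Variables (R : realType) (n : nat).
Local Notation vec := 'rV[R]_n.
Variable h : vec -> \bar R.

(* Junk value 0 outside dom h. *)
Definition fval (u : vec) : R := fine (h u).

Lemma fvalE u : eproper h -> edom h u -> h u = (fval u)%:E.
Proof. by case=> hN _ du; rewrite fineK // fin_numElt ltNye hN. Qed.

Lemma edom_le (r c : R) u : ((r%:E + h u) <= c%:E)%E -> edom h u.
Proof.
move=> le_c; rewrite /edom ltey; apply: contraTN le_c => /eqP ->.
by rewrite addey // leye_eq.
Qed.

Lemma le_sub_of_interior (X Y D : R) : 0 <= D ->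
  (forall t, 0 < t -> t < 1 -> X <= Y - (1 - t) * D) -> X <= Y - D.
Proof.
move=> D0 H; apply/ler_addgt0Pr => e e0.
pose t := Num.min (1 / 2) (e / (D + 1)).
have t0 : 0 < t by rewrite lt_min; apply/andP; split; [lra | apply: divr_gt0; lra].
have t1 : t <= 1 / 2 by rewrite ge_min lexx.
have tD : t * (D + 1) <= e by rewrite -ler_pdivlMr ?ge_min ?lexx ?orbT //; lra.
have := H t t0 ltac:(lra).
have : t * D <= t * (D + 1) by rewrite ler_pM2l //; lra.
lra.
Qed.

Lemma dot_convex_comb (t : R) (p q : vec) :
  dot (t *: p + (1 - t) *: q) (t *: p + (1 - t) *: q)
  = t * dot p p + (1 - t) * dot q q - t * (1 - t) * dot (p - q) (p - q).
Proof. by rewrite dot_comb dot_sub_sqr; ring. Qed.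

Hypotheses (hprop : eproper h) (hconv : econvex h).

Lemma prox_quadratic_growth (c p z : vec) (k0 kap : R) : 0 <= kap -> edom h z ->
  let F v := k0 + dot p (v - c) + fval v + kap / 2 * dot (v - c) (v - c) in
  (forall u, edom h u -> F z <= F u) ->
  forall u, edom h u -> F z + kap / 2 * dot (u - z) (u - z) <= F u.
Proof.
move=> kap0 dz F Fmin u du.
suff : F z <= F u - kap / 2 * dot (u - z) (u - z) by lra.
apply: le_sub_of_interior => [|t t0 t1]; first by rewrite mulr_ge0 ?dot_ge0 //; lra.
set v := t *: u + (1 - t) *: z.
have hv := hconv u z t0 t1.
rewrite -/v (fvalE hprop du) (fvalE hprop dz) -!EFinM -EFinD in hv.
have dv : edom h v by apply: le_lt_trans hv _; exact: ltry.
rewrite (fvalE hprop dv) lee_fin in hv.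
have vc : v - c = t *: (u - c) + (1 - t) *: (z - c) by apply/rowP => i; rewrite !mxE; ring.
have uz : (u - c) - (z - c) = u - z by apply/rowP => i; rewrite !mxE; ring.
have Fv : F v <= t * F u + (1 - t) * F z - t * (1 - t) * (kap / 2 * dot (u - z) (u - z)).
  by rewrite /F vc dot_convex_comb uz (dotDr _ _ p) !dotZr; lra.
suff : t * F z <= t * (F u - (1 - t) * (kap / 2 * dot (u - z) (u - z))) by rewrite ler_pM2l.
have := Fmin v dv; lra.
Qed.
End ExtendedValued.

Section ACG.
Variables (R : realType) (n : nat).
Local Notation vec := 'rV[R]_n.
Variables (g : vec -> R) (gg : vec -> vec) (h : vec -> \bar R) (mu L : R) (x0 : vec)
  (s : acg_seq R n) (J : nat).
Hypotheses (L0 : 0 < L) (mu0 : 0 <= mu)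
  (g_lower : forall x u, lin g gg x u + mu / 2 * dot (u - x) (u - x) <= g u)
  (g_upper : forall x u, g u <= lin g gg x u + (L + mu) / 2 * dot (u - x) (u - x))
  (hprop : eproper h) (hconv : econvex h)
  (tr : acg_trace g gg h mu L x0 s J).

Local Notation A := (sA s).
Local Notation a := (sa s).
Local Notation tau := (stau s).
Local Notation x := (sx s).
Local Notation y := (sy s).
Local Notation xt := (sxt s).
Local Notation yt := (syt s).

Lemma acg_trace0 : [/\ A 0 = 0, tau 0 = 1 / L, y 0 = x0 & x 0 = x0].
Proof. by case: tr => [? [? [? [? _]]]]. Qed.

Lemma acg_traceS j : (j < J)%N ->
  [/\ [/\ a j = (tau j + Num.sqrt (tau j ^+ 2 + 4 * tau j * A j)) / 2,
          tau j.+1 = tau j + mu * a j / L &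
          A j.+1 = A j + a j],
      xt j = (A j / A j.+1) *: y j + (a j / A j.+1) *: x j,
      (forall u,
         ((lin g gg (xt j) (yt j.+1))%:E + h (yt j.+1)
            + ((L + mu) / 2 * vnorm (yt j.+1 - xt j) ^+ 2)%:E
          <= (lin g gg (xt j) u)%:E + h u + ((L + mu) / 2 * vnorm (u - xt j) ^+ 2)%:E)%E),
      (y j.+1 = y j \/ y j.+1 = yt j.+1)
        /\ (((g (y j.+1))%:E + h (y j.+1)) <= ((g (y j))%:E + h (y j)))%E
        /\ (((g (y j.+1))%:E + h (y j.+1)) <= ((g (yt j.+1))%:E + h (yt j.+1)))%E &
      x j.+1 = (1 / (A j.+1 * mu + 1)) *:
        (((L + mu) * a j) *: yt j.+1 - (A j * a j * L / A j.+1) *: y j)].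
Proof. by case: tr => [_ [_ [_ [_ H]]]]; exact: H. Qed.

Lemma acg_tau j : (j <= J)%N -> 0 <= A j /\ tau j = (1 + mu * A j) / L.
Proof.
elim: j => [|j IH] jJ; first by have [-> -> _ _] := acg_trace0; rewrite mulr0 addr0.
have [[aE tauS AS] _ _ _ _] := acg_traceS jJ; have [A0 tauE] := IH (ltnW jJ).
have tau0 : 0 < tau j by rewrite tauE divr_gt0 //; have := mulr_ge0 mu0 A0; lra.
have [a0 _] := quad_root_spec tau0 A0; rewrite -aE in a0.
split; first by rewrite AS; lra.
by rewrite tauS AS tauE; field; rewrite gt_eqF.
Qed.

Lemma acg_scalars j : (j < J)%N ->
  [/\ 0 < a j, a j ^+ 2 = tau j * A j.+1, 0 < A j.+1 & L * tau j = 1 + mu * A j].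
Proof.
move=> jJ; have [[aE _ AS] _ _ _ _] := acg_traceS jJ.
have [A0 tauE] := acg_tau (ltnW jJ).
have tau0 : 0 < tau j by rewrite tauE divr_gt0 //; have := mulr_ge0 mu0 A0; lra.
have [a0 a2] := quad_root_spec tau0 A0; rewrite -aE in a0 a2.
by split; rewrite ?AS //; [lra | rewrite tauE; field; rewrite gt_eqF].
Qed.

Lemma acg_A_growth j : (j <= J)%N -> j%:R ^+ 2 * (1 / L) / 4 <= A j.
Proof.
apply: (quad_root_sum_growth (tau := tau)); first by rewrite divr_gt0.
  by have [] := acg_trace0.
move=> k kJ; have [[<- _ ->] _ _ _ _] := acg_traceS kJ.
have [A0 ->] := acg_tau (ltnW kJ); split => //.
by rewrite ler_pM2r ?invr_gt0 //; have := mulr_ge0 mu0 A0; lra.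
Qed.

Definition psiR (u : vec) : R := g u + fval h u.
Definition gamtR j (u : vec) : R :=
  lin g gg (xt j) u + fval h u + mu / 2 * dot (u - xt j) (u - xt j).
Definition gamR j (u : vec) : R := gamtR j (yt j.+1)
  + (L * dot (xt j - yt j.+1) (u - yt j.+1) + mu / 2 * dot (u - yt j.+1) (u - yt j.+1)).
Fixpoint GamR j (u : vec) : R := match j with
  | 0 => 0
  | j'.+1 => (A j' * GamR j' u + a j' * gamR j' u) * (1 / A j'.+1) end.

Lemma acg_yt_dom j : (j < J)%N -> edom h (yt j.+1).
Proof.
move=> jJ; have [_ _ ytmin _ _] := acg_traceS jJ; have [_ [u0 du0]] := hprop.
have := ytmin u0; rewrite (fvalE hprop du0) -!EFinD => le_u0.
rewrite /edom ltey; apply: contraTN le_u0 => /eqP ->.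
by rewrite addey // addye // leye_eq.
Qed.

Lemma acg_yt_argmin j : (j < J)%N -> forall u, edom h u ->
  lin g gg (xt j) (yt j.+1) + fval h (yt j.+1)
    + (L + mu) / 2 * dot (yt j.+1 - xt j) (yt j.+1 - xt j)
  <= lin g gg (xt j) u + fval h u + (L + mu) / 2 * dot (u - xt j) (u - xt j).
Proof.
move=> jJ u du; have [_ _ ytmin _ _] := acg_traceS jJ.
have := ytmin u.
by rewrite (fvalE hprop du) (fvalE hprop (acg_yt_dom jJ)) -!EFinD lee_fin !vnorm2.
Qed.

Lemma acg_y_dom j : (j < J)%N -> edom h (y j.+1) /\ psiR (y j.+1) <= psiR (yt j.+1).
Proof.
move=> jJ; have [_ _ _ [_ [_ le_yt]] _] := acg_traceS jJ.
move: le_yt; rewrite (fvalE hprop (acg_yt_dom jJ)) -EFinD => le_yt.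
have dy := edom_le le_yt.
by split => //; move: le_yt; rewrite (fvalE hprop dy) -EFinD lee_fin.
Qed.

Lemma gam_le_gamt j : (j < J)%N -> forall u, edom h u -> gamR j u <= gamtR j u.
Proof.
move=> jJ u du; have Lmu0 : 0 <= L + mu by move: L0 mu0; lra.
have := prox_quadratic_growth (c := xt j) (p := gg (xt j)) (k0 := g (xt j))
  hprop hconv Lmu0 (acg_yt_dom jJ) _ du.
move/(_ (acg_yt_argmin jJ)); rewrite /gamR /gamtR /lin.
rewrite (dot_three_point u (yt j.+1) (xt j)).
have -> : dot (xt j - yt j.+1) (u - yt j.+1) = - dot (yt j.+1 - xt j) (u - yt j.+1).
  by rewrite -dotNl opprB.
nra.
Qed.

Lemma gamt_le_psi j u : gamtR j u <= psiR u.
Proof. by have := g_lower (xt j) u; rewrite /gamtR /psiR; lra. Qed.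

Lemma psi_yt_le j : psiR (yt j.+1)
  <= gamtR j (yt j.+1) + L / 2 * dot (yt j.+1 - xt j) (yt j.+1 - xt j).
Proof. by have := g_upper (xt j) (yt j.+1); rewrite /gamtR /psiR; lra. Qed.

Lemma gamE j u : (j < J)%N -> gam g gg h mu L s j u = (gamR j u)%:E.
Proof.
move=> jJ; rewrite /gam /gamt (fvalE hprop (acg_yt_dom jJ)) !vnorm2.
by rewrite -!EFinD.
Qed.

Lemma GamE j u : (j <= J)%N -> Gam g gg h mu L s j u = (GamR j u)%:E.
Proof.
elim: j => [|j IH] //= jJ.
by rewrite IH ?(ltnW jJ) // gamE // -!EFinM -EFinD -EFinM.
Qed.

Lemma GamR_step j u : (j < J)%N -> A j.+1 * GamR j.+1 u = A j * GamR j u + a j * gamR j u.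
Proof.
by move=> jJ; have [_ _ A0 _] := acg_scalars jJ; rewrite /=; field; rewrite gt_eqF.
Qed.

Lemma GamR_le_psi j u : (j <= J)%N -> edom h u -> A j * GamR j u <= A j * psiR u.
Proof.
move=> + du; elim: j => [|j IH] jJ; first by have [-> _ _ _] := acg_trace0; rewrite !mul0r.
rewrite GamR_step //; have [a0 _ _ _] := acg_scalars jJ.
have [[_ _ ->] _ _ _ _] := acg_traceS jJ.
have : a j * gamR j u <= a j * psiR u.
  by rewrite ler_pM2l //; apply: le_trans (gam_le_gamt jJ du) (gamt_le_psi _ _).
have := IH (ltnW jJ); lra.
Qed.

Definition acg_pot j : R := A j * GamR j (x j) + 1 / 2 * dot (x j - x0) (x j - x0).

Lemma acg_pot0 : acg_pot 0 = 0.
Proof. by rewrite /acg_pot /=; have [-> _ _ ->] := acg_trace0; rewrite subrr dot0l; ring. Qed.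

(* First-order condition for x_{j+1} = argmin (A_{j+1} Gamma_{j+1} + |. - x0|^2 / 2). *)
Lemma acg_x_next j : (j < J)%N ->
  (1 + mu * A j + a j * mu) *: x j.+1
  = (1 + mu * A j) *: x j + (a j * mu) *: yt j.+1 - (a j * L) *: (xt j - yt j.+1).
Proof.
move=> jJ; have [[_ _ AS] xtE _ _ xS] := acg_traceS jJ.
have [a0 a2 A1 Ltau] := acg_scalars jJ; have [A0 _] := acg_tau (ltnW jJ).
have a2L : a j ^+ 2 * L / (A j + a j) = 1 + mu * A j.
  by rewrite -Ltau a2 AS; field; rewrite -AS gt_eqF.
have A1n0 : A j + a j != 0 by rewrite -AS gt_eqF.
have den0 : (A j + a j) * mu + 1 != 0.
  by rewrite -AS gt_eqF // ltr_pwDr // mulr_ge0 // ltW.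
apply/rowP => i; rewrite xS xtE AS !mxE.
set X := x j 0 i; set Y := y j 0 i; set T := yt j.+1 0 i.
have : (1 + mu * A j) * X + a j * mu * T
       - a j * L * (A j / (A j + a j) * Y + a j / (A j + a j) * X - T)
       - (1 + mu * A j + a j * mu) * (1 / ((A j + a j) * mu + 1)
           * ((L + mu) * a j * T - A j * a j * L / (A j + a j) * Y))
     = X * ((1 + mu * A j) - a j ^+ 2 * L / (A j + a j)).
  by field; apply/andP; split.
by rewrite a2L subrr mulr0 => /eqP; rewrite subr_eq0 => /eqP <-.
Qed.

Lemma GamR_quad j u : (j <= J)%N ->
  A j * GamR j u + 1 / 2 * dot (u - x0) (u - x0)
  = acg_pot j + (1 + mu * A j) / 2 * dot (u - x j) (u - x j).
Proof.
elim: j u => [|j IH] u jJ.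
  by rewrite /acg_pot /=; have [-> _ _ ->] := acg_trace0; rewrite subrr dot0l; ring.
have [[_ _ AS] _ _ _ _] := acg_traceS jJ.
have expand w : A j.+1 * GamR j.+1 w + 1 / 2 * dot (w - x0) (w - x0)
   = acg_pot j + a j * gamtR j (yt j.+1)
     + ((1 + mu * A j) / 2 * dot (w - x j) (w - x j)
        + (a j * mu) / 2 * dot (w - yt j.+1) (w - yt j.+1)
        + dot ((a j * L) *: (xt j - yt j.+1)) (w - yt j.+1)).
  by rewrite GamR_step // /gamR dotZl; have := IH w (ltnW jJ); lra.
rewrite /acg_pot expand expand (quad_sum_recenter u (acg_x_next jJ)) AS.
have -> : 1 + mu * A j + a j * mu = 1 + mu * (A j + a j) by ring.
ring.
Qed.

Lemma acg_pot_step j : (j < J)%N ->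
  acg_pot j.+1 = acg_pot j + (1 + mu * A j) / 2 * dot (x j.+1 - x j) (x j.+1 - x j)
                 + a j * gamR j (x j.+1).
Proof. by move=> jJ; have := GamR_quad (x j.+1) (ltnW jJ); rewrite /acg_pot GamR_step //; lra. Qed.

Lemma acg_square_completion j (e d : vec) : (j < J)%N ->
  0 <= L * A j.+1 / 2 * dot e e + L * a j * dot e d + (1 + mu * A j) / 2 * dot d d.
Proof.
move=> jJ; have [a0 a2 A1 Ltau] := acg_scalars jJ.
have muA : 1 + mu * A j = L * a j ^+ 2 / A j.+1 by rewrite a2 -Ltau; field; rewrite gt_eqF.
rewrite -(pmulr_rge0 _ A1) muA.
have -> : A j.+1 * (L * A j.+1 / 2 * dot e e + L * a j * dot e d
                    + L * a j ^+ 2 / A j.+1 / 2 * dot d d)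
    = L / 2 * dot (A j.+1 *: e + a j *: d) (A j.+1 *: e + a j *: d).
  by rewrite dot_comb; field; rewrite gt_eqF.
by rewrite mulr_ge0 ?dot_ge0 // divr_ge0 // ltW.
Qed.

Lemma acg_cross_terms j : (j < J)%N ->
  A j * dot (xt j - yt j.+1) (y j - yt j.+1) + a j * dot (xt j - yt j.+1) (x j.+1 - yt j.+1)
  = A j.+1 * dot (xt j - yt j.+1) (xt j - yt j.+1)
    + a j * dot (xt j - yt j.+1) (x j.+1 - x j).
Proof.
move=> jJ; have [[_ _ AS] xtE _ _ _] := acg_traceS jJ; have [_ _ A1 _] := acg_scalars jJ.
rewrite -!dotZr -!dotDr; congr (dot _ _).
apply/rowP => i; rewrite xtE AS !mxE; field.
by rewrite -AS gt_eqF.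
Qed.

Lemma acg_gam_y_le_pot j : (j < J)%N -> A j * psiR (y j) <= acg_pot j ->
  A j * gamR j (y j) <= acg_pot j.
Proof.
case: j => [|j] jJ le_pot; first by rewrite acg_pot0; have [-> _ _ _] := acg_trace0; rewrite mul0r.
have [dy _] := acg_y_dom (ltnW jJ); have [A0 _] := acg_tau (ltnW jJ).
apply: le_trans le_pot; apply: ler_wpM2l => //.
exact: le_trans (gam_le_gamt jJ dy) (gamt_le_psi _ _).
Qed.

Lemma acg_psi_le_pot j : (j <= J)%N -> A j * psiR (y j) <= acg_pot j.
Proof.
elim: j => [|j IH] jJ; first by rewrite acg_pot0; have [-> _ _ _] := acg_trace0; rewrite mul0r.
have gy := acg_gam_y_le_pot jJ (IH (ltnW jJ)).
have [[_ _ AS] _ _ _ _] := acg_traceS jJ; have [a0 _ A1 _] := acg_scalars jJ.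
have [A0 _] := acg_tau (ltnW jJ); have [_ psi_y] := acg_y_dom jJ.
rewrite acg_pot_step //; move: gy; rewrite /gamR.
set K := gamtR j (yt j.+1); set e := xt j - yt j.+1; set d := x j.+1 - x j.
have ub : A j.+1 * psiR (y j.+1) <= A j.+1 * (K + L / 2 * dot e e).
  rewrite ler_pM2l //; apply: le_trans psi_y (le_trans (psi_yt_le j) _).
  by rewrite -[yt j.+1 - xt j]opprB dotNl dotNr opprK.
have mean : L * (A j * dot e (y j - yt j.+1)) + L * (a j * dot e (x j.+1 - yt j.+1))
    = L * (A j.+1 * dot e e) + L * (a j * dot e d) by rewrite -!mulrDr acg_cross_terms.
have sq := acg_square_completion e d jJ.
have mu_y : 0 <= A j * (mu / 2 * dot (y j - yt j.+1) (y j - yt j.+1)).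
  by rewrite mulr_ge0 // mulr_ge0 ?dot_ge0 // divr_ge0.
have mu_x : 0 <= a j * (mu / 2 * dot (x j.+1 - yt j.+1) (x j.+1 - yt j.+1)).
  by rewrite mulr_ge0 ?(ltW a0) // mulr_ge0 ?dot_ge0 // divr_ge0.
rewrite AS in ub mean sq; nra.
Qed.

Lemma acg_summary j : (1 <= j)%N -> (j <= J)%N ->
  [/\ edom h (y j), j%:R ^+ 2 * (1 / L) / 4 <= A j, 0 < A j &
   exists G : vec -> R,
   [/\ (forall u, Gam g gg h mu L s j u = (G u)%:E),
       (forall u, edom h u -> G u <= g u + fval h u),
       (forall u, A j * G u + 1 / 2 * dot (u - x0) (u - x0)
          = A j * G (x j) + 1 / 2 * dot (x j - x0) (x j - x0)
            + (1 + mu * A j) / 2 * dot (u - x j) (u - x j)) &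
       A j * (g (y j) + fval h (y j)) <= A j * G (x j) + 1 / 2 * dot (x j - x0) (x j - x0)]].
Proof.
case: j => [//|j] _ jJ; have [dy _] := acg_y_dom jJ; have [_ _ A1 _] := acg_scalars jJ.
split => //; first exact: acg_A_growth.
exists (GamR j.+1); split.
- by move=> u; exact: GamE.
- by move=> u du; have := GamR_le_psi jJ du; rewrite ler_pM2l.
- by move=> u; rewrite GamR_quad.
- exact: acg_psi_le_pot.
Qed.
End ACG.

Section Stage.
Variables (R : realType) (n : nat).
Local Notation vec := 'rV[R]_n.

(* With r = lam / A <= 1/6 the left side is at most (r + r^2) |p|^2 <= 7/9 |p + w|^2. *)
Lemma restart_crit_ineq (lam A eta : R) (p w : vec) : 0 < lam -> 6 * lam <= A ->
  0 <= eta -> A * eta <= 1 / 2 * dot (p + w) (p + w) - (1 + 1 / lam * A) / 2 * dot w w ->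
  dot (w - (lam / A) *: p) (w - (lam / A) *: p) + 2 * lam * eta
    <= 9 / 10 * dot (p + w) (p + w).
Proof.
move=> lam0 A6 eta0; have A0 : 0 < A by lra.
set r := lam / A; have r0 : 0 < r by rewrite divr_gt0.
have r6 : r <= 1 / 6 by rewrite /r ler_pdivrMr //; lra.
have S : dot (p + w) (p + w) = dot p p + 2 * dot p w + dot w w.
  by rewrite dotDl !dotDr (dotC w p); ring.
have D : dot (w - r *: p) (w - r *: p) = dot w w - 2 * r * dot p w + r ^+ 2 * dot p p.
  by rewrite dot_sub_sqr dotZl !dotZr (dotC w p); ring.
have pw2 : 0 <= dot p p + 4 * dot p w + 4 * dot w w.
  by have := dot_ge0 (1 *: p + 2 *: w); rewrite dot_comb; lra.
rewrite D S.
set P := dot p p in pw2 *; set X := dot p w in pw2 *; set W := dot w w in pw2 * => Aeta.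
have P0 : 0 <= P := dot_ge0 p; have W0 : 0 <= W := dot_ge0 w.
have eta_r : 2 * lam * eta <= r * (P + 2 * X + W) - (r + 1) * W.
  have -> : 2 * lam * eta = 2 * r * (A * eta) by rewrite /r; field; rewrite gt_eqF.
  have -> : r * (P + 2 * X + W) - (r + 1) * W
      = 2 * r * (1 / 2 * (P + 2 * X + W) - (1 + 1 / lam * A) / 2 * W).
    by rewrite /r; field; rewrite !gt_eqF.
  by rewrite ler_pM2l //; lra.
have W_S : W <= P + 2 * X + W.
  have := mulr_ge0 (mulr_ge0 (ltW (divr_gt0 ltr01 lam0)) (ltW A0)) W0.
  have := mulr_ge0 (ltW A0) eta0.
  lra.
have P_S : P <= 4 * (P + 2 * X + W) by lra.
have rP : r * P <= 1 / 6 * P by rewrite ler_wpM2r.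
have r2P : r ^+ 2 * P <= 1 / 36 * P.
  apply: ler_wpM2r => //; rewrite expr2.
  have : r * r <= 1 / 6 * (1 / 6) by apply: ler_pM; lra.
  lra.
nra.
Qed.

Lemma prox_model_affine (lam A : R) (G : vec -> R) (x zt : vec) : 0 < lam -> 0 < A ->
  (forall u, A * G u + 1 / 2 * dot (u - zt) (u - zt)
     = A * G x + 1 / 2 * dot (x - zt) (x - zt) + (1 + 1 / lam * A) / 2 * dot (u - x) (u - x)) ->
  forall u, G u - 1 / (2 * lam) * dot (u - zt) (u - zt)
    = G x - 1 / (2 * lam) * dot (x - zt) (x - zt)
      + dot ((1 / A) *: (zt - x) + (1 / lam) *: (zt - x)) (u - x).
Proof.
move=> lam0 A0 Gq u; have := Gq u.
rewrite (dot_three_point u x zt) (dotDl ((1 / A) *: _)) !dotZl -[zt - x]opprB dotNl.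
set Y := dot (x - zt) (u - x); set Q := dot (u - x) (u - x) => q.
have -> : G u = G x + (A / lam / 2 * Q - Y) / A.
  by apply: (mulfI (lt0r_neq0 A0)); rewrite mulrDr mulrCA divff ?gt_eqF // mulr1; lra.
by field; rewrite !gt_eqF.
Qed.

Variables (f : vec -> R) (gf : vec -> vec) (L : R) (h : vec -> \bar R) (lam : R) (zt : vec)
  (s : acg_seq R n) (J : nat).
Hypotheses (L0 : 0 < L) (fconv : rconvex f) (fsm : L_smooth f gf L)
  (hprop : eproper h) (hconv : econvex h) (lam0 : 0 < lam)
  (tr : acg_trace (stage_g f lam zt) (stage_gg gf lam zt) h (1 / lam) L zt s J).

Lemma stage_g_lower x u :
  lin (stage_g f lam zt) (stage_gg gf lam zt) x u + (1 / lam) / 2 * dot (u - x) (u - x)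
  <= stage_g f lam zt u.
Proof.
rewrite /lin /stage_g /stage_gg !vnorm2 (dotDl (gf x)) dotZl (dot_three_point u x zt).
have := gradient_ineq fconv (proj1 fsm) x u.
have : 1 / lam / 2 = 1 / (2 * lam) by field; rewrite gt_eqF.
lra.
Qed.

Lemma stage_g_upper x u :
  stage_g f lam zt u <= lin (stage_g f lam zt) (stage_gg gf lam zt) x u
     + (L + 1 / lam) / 2 * dot (u - x) (u - x).
Proof.
rewrite /lin /stage_g /stage_gg !vnorm2 (dotDl (gf x)) dotZl (dot_three_point u x zt).
have := descent fconv (proj1 fsm) (proj2 fsm) x u.
have : (L + 1 / lam) / 2 = L / 2 + 1 / (2 * lam) by field; rewrite gt_eqF.
have : 1 / lam = 2 * (1 / (2 * lam)) by field; rewrite gt_eqF.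
nra.
Qed.

Lemma stage_eps j : (1 <= j)%N -> (j <= J)%N ->
  exists eta : R,
  [/\ eps_j f gf h L lam zt s j = eta%:E, 0 <= eta,
      esubdiff (phi_of f h) (sy s j) (vhat lam zt s j) eta%:E &
      sA s j * eta <= 1 / 2 * dot (sy s j - zt) (sy s j - zt)
        - (1 + 1 / lam * sA s j) / 2 * dot (sy s j - sx s j) (sy s j - sx s j)].
Proof.
move=> j1 jJ.
have [dy _ A0 [G [GE Gle Gq Gm]]] :=
  acg_summary L0 (ltW (divr_gt0 ltr01 lam0)) stage_g_lower stage_g_upper hprop hconv tr j1 jJ.
set A := sA s j in A0 Gq Gm *; set x := sx s j in Gq Gm *; set y := sy s j in dy Gm *.
set v := vhat lam zt s j.
have aff := prox_model_affine lam0 A0 Gq; rewrite -/v in aff.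
have phiE u : edom h u -> phi_of f h u = (f u + fval h u)%:E.
  by move=> du; rewrite /phi_of (fvalE hprop du).
exists (stage_g f lam zt y + fval h y - G y); split.
- rewrite /eps_j GE (phiE _ dy) vnorm2 -/x -/y -/v -!EFinB; congr (_%:E).
  by have := aff y; rewrite /stage_g vnorm2; lra.
- by have := Gle y dy; lra.
- split; first by rewrite lee_fin; have := Gle y dy; lra.
  move=> u; have [du|ndu] := boolP (h u < +oo)%E; last first.
    by move: ndu; rewrite /phi_of ltey negbK => /eqP ->; rewrite addey // leey.
  rewrite (phiE _ dy) (phiE _ du) -!EFinD lee_fin.
  have := aff u; have := aff y; have := Gle u du; rewrite /stage_g !vnorm2.
  have -> : dot v (u - x) = dot v (y - x) + dot v (u - y).
    by rewrite -dotDr; congr (dot v _); apply/rowP => i; rewrite !mxE; ring.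
  lra.
- have := Gq y; move: Gm; rewrite /stage_g vnorm2 mulrBr; lra.
Qed.

Lemma stage_crit j : (1 <= j)%N -> (j <= J)%N -> 6 * lam <= sA s j ->
  crit_at f gf h L lam zt s j.
Proof.
move=> j1 jJ A6; have [eta [etaE eta0 sub Aeta]] := stage_eps j1 jJ.
rewrite /crit_at /restart_crit etaE; split => //.
rewrite -EFinM -EFinD lee_fin !vnorm2.
set A := sA s j in A6 Aeta *; set x := sx s j in Aeta *; set y := sy s j in Aeta *.
have A0 : 0 < A by move: lam0; lra.
have crit_lhs : lam *: vhat lam zt s j + y - zt = (y - x) - (lam / A) *: (x - zt).
  by apply/rowP => i; rewrite /vhat -/A -/x !mxE; field; rewrite !gt_eqF.
have y_zt : y - zt = (x - zt) + (y - x) by apply/rowP => i; rewrite !mxE; ring.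
rewrite crit_lhs -[zt - y]opprB dotNl dotNr opprK y_zt.
by apply: restart_crit_ineq => //; rewrite -y_zt.
Qed.

Lemma stage_count : (forall j, (1 <= j)%N -> (j < J)%N -> ~ crit_at f gf h L lam zt s j) ->
  1 <= lam * L -> J%:R ^+ 2 <= 36 * (lam * L) :> R.
Proof.
move=> no_crit lamL; have [J1|J2] := leqP J 1.
  have : J%:R <= 1 :> R by rewrite (ler_nat R J 1).
  by have : 0 <= J%:R :> R by []; nra.
have JE : J = J.-1.+1 by rewrite prednK // (ltn_trans _ J2).
set j := J.-1 in JE; have jJ : (j < J)%N by rewrite [X in (_ < X)%N]JE.
have j1 : (1 <= j)%N by move: J2; rewrite JE.
have A_lt : sA s j < 6 * lam.
  by rewrite ltNge; apply/negP => A6; exact: no_crit j j1 jJ (stage_crit j1 (ltnW jJ) A6).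
have [_ A_ge _ _] :=
  acg_summary L0 (ltW (divr_gt0 ltr01 lam0)) stage_g_lower stage_g_upper hprop hconv tr
    j1 (ltnW jJ).
have : j%:R ^+ 2 < 24 * (lam * L) :> R.
  have := le_lt_trans A_ge A_lt; rewrite -(@ltr_pM2r _ (4 * L)); last by move: L0; lra.
  have -> : j%:R ^+ 2 * (1 / L) / 4 * (4 * L) = j%:R ^+ 2 by field; rewrite gt_eqF.
  lra.
rewrite JE -natr1; have : 0 <= j%:R :> R by []; nra.
Qed.
End Stage.

Section Restart.
Variables (R : realType) (n : nat).
Local Notation vec := 'rV[R]_n.

(* The relative-error criterion pays for the increase b^2 |u|^2 / 2 of |z - xs|^2 / 2. *)
Lemma restart_potential_decrease (lam b B eta phis Pw Pt P1 : R) (z z1 w wt zt u xs : vec) :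
  0 < lam -> 0 <= B -> 0 < b -> b ^+ 2 = lam * (B + b) ->
  (B + b) *: zt = B *: w + b *: z -> z1 = z - b *: u ->
  Pt + dot u (xs - wt) - eta <= phis -> Pt + dot u (w - wt) - eta <= Pw -> P1 <= Pt ->
  dot (lam *: u + wt - zt) (lam *: u + wt - zt) + 2 * lam * eta <= dot (zt - wt) (zt - wt) ->
  (B + b) * (P1 - phis) + 1 / 2 * dot (z1 - xs) (z1 - xs)
    <= B * (Pw - phis) + 1 / 2 * dot (z - xs) (z - xs).
Proof.
move=> lam0 B0 b0 b2 ztE z1E sub_xs sub_w P1t crit.
have B1 : 0 < B + b by rewrite ltr_wpDl.
set U := dot u u; set Uz := dot u (wt - zt); set Zu := dot (z - xs) u.
have mean : b * dot u (xs - wt) + B * dot u (w - wt) = - (B + b) * Uz - b * Zu.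
  rewrite /Uz /Zu (dotC _ u) -!dotZr -dotNr -!dotDr; congr (dot u _).
  by apply/rowP => i; move/rowP/(_ i): ztE; rewrite !mxE; lra.
have z1_xs : dot (z1 - xs) (z1 - xs) = dot (z - xs) (z - xs) - 2 * b * Zu + b ^+ 2 * U.
  have -> : z1 - xs = 1 *: (z - xs) + (- b) *: u.
    by rewrite z1E; apply/rowP => i; rewrite !mxE; ring.
  by rewrite dot_comb -/U -/Zu; ring.
have crit_u : lam ^+ 2 * U + 2 * lam * Uz + 2 * lam * eta <= 0.
  move: crit; rewrite -[zt - wt]opprB dotNl dotNr opprK.
  have -> : lam *: u + wt - zt = lam *: u + 1 *: (wt - zt) by apply/rowP => i; rewrite !mxE; ring.
  by rewrite dot_comb -/U -/Uz expr1n; lra.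
have extra : (B + b) * (Uz + eta + lam / 2 * U) <= 0.
  rewrite pmulr_rle0 //; have : 2 * lam * (Uz + eta + lam / 2 * U) <= 0.
    have -> : 2 * lam * (Uz + eta + lam / 2 * U) = lam ^+ 2 * U + 2 * lam * Uz + 2 * lam * eta.
      by field.
    exact: crit_u.
  by rewrite pmulr_rle0 //; lra.
have h1 : b * (Pt + dot u (xs - wt) - eta) <= b * phis by rewrite ler_pM2l.
have h2 : B * (Pt + dot u (w - wt) - eta) <= B * Pw by rewrite ler_wpM2l.
have h3 : (B + b) * P1 <= (B + b) * Pt by rewrite ler_wpM2l // ltW.
have b2U : b ^+ 2 * U = lam * (B + b) * U by rewrite b2.
rewrite z1_xs; lra.
Qed.

Lemma restart_crit_fin (f : vec -> R) (h : vec -> \bar R) (lam : R) (zt wt u : vec)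
    (eta : \bar R) : eproper h -> 0 < lam -> restart_crit f h lam zt wt u eta ->
  exists e : R, [/\ eta = e%:E, 0 <= e, edom h wt,
    (forall y, edom h y -> f wt + fval h wt + dot u (y - wt) - e <= f y + fval h y) &
    dot (lam *: u + wt - zt) (lam *: u + wt - zt) + 2 * lam * e
      <= 9 / 10 * dot (zt - wt) (zt - wt)].
Proof.
move=> hprop lam0 [[eta0 sub] crit].
have eta_fin : (eta < +oo)%E.
  rewrite ltey; apply: contraTN crit => /eqP ->.
  by rewrite gt0_muley ?lte_fin ?mulr_gt0 // addey // leye_eq.
have etaE : eta = (fine eta)%:E.
  by rewrite fineK // fin_numElt eta_fin andbT; apply: lt_le_trans eta0; rewrite ltNye.
have [_ [y0 dy0]] := hprop.
have dwt : edom h wt.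
  move: (sub y0); rewrite /phi_of etaE (fvalE hprop dy0) -EFinD /edom ltey => le_y0.
  by apply: contraTN le_y0 => /eqP ->; rewrite addey // !addye // leye_eq.
exists (fine eta); split => //.
- by move: eta0; rewrite etaE lee_fin.
- move=> y dy; move: (sub y).
  by rewrite /phi_of etaE (fvalE hprop dwt) (fvalE hprop dy) -!EFinD lee_fin.
- by move: crit; rewrite etaE -EFinM -EFinD lee_fin !vnorm2.
Qed.

Lemma dist_to_ge0 (S : set vec) x : (exists y, S y) -> 0 <= dist_to S x.
Proof.
move=> [y Sy]; apply: lb_le_inf => [|_ [y' _ ->]]; last exact: vnorm_ge0.
by exists (vnorm (x - y)), y.
Qed.

Lemma dist_to_sqr_ge (S : set vec) x (c : R) : (exists y, S y) -> 0 <= c ->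
  (forall y, S y -> c <= vnorm (x - y) ^+ 2) -> c <= dist_to S x ^+ 2.
Proof.
move=> [y Sy] c0 le_c; rewrite -(sqr_sqrtr c0) ler_sqr ?nnegrE ?sqrtr_ge0 //; last first.
  by apply: dist_to_ge0; exists y.
apply: lb_le_inf => [|_ [y' Sy' ->]]; first by exists (vnorm (x - y)), y.
by rewrite -ler_sqr ?nnegrE ?sqrtr_ge0 ?vnorm_ge0 // sqr_sqrtr // le_c.
Qed.

Variables (f : vec -> R) (gf : vec -> vec) (h : vec -> \bar R) (L lam : R) (w0 : vec)
  (z w zt wt u : nat -> vec) (b B : nat -> R) (eta : nat -> \bar R)
  (m : nat -> nat) (s : nat -> acg_seq R n) (K J : nat).
Hypotheses (hprop : eproper h) (lam0 : 0 < lam) (dw0 : edom h w0)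
  (run : restart_prefix f gf h L lam w0 z w zt wt u b B eta m s K J).

Lemma restart_B_growth k : (k <= K.+1)%N -> k%:R ^+ 2 * lam / 4 <= B k.
Proof.
have [[_ _ B0] Brec _ _] := run.
apply: (quad_root_sum_growth (tau := fun=> lam)) => // j jK.
by have [<- -> _] := Brec j.+1 isT jK.
Qed.

Lemma restart_b_spec k : (k <= K)%N -> 0 <= B k /\ 0 < b k.+1 /\ b k.+1 ^+ 2 = lam * (B k + b k.+1).
Proof.
move=> kK; have [_ Brec _ _] := run; have [bE _ _] := Brec k.+1 isT kK.
have B0 : 0 <= B k.
  apply: le_trans (restart_B_growth (leqW kK)); rewrite divr_ge0 ?mulr_ge0 ?sqr_ge0 //.
  exact: ltW.
by have [b0 b2] := quad_root_spec lam0 B0; rewrite -bE in b0 b2.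
Qed.

Lemma restart_dom_w k : (k <= K)%N -> edom h (w k).
Proof.
have [[_ w0E _] _ Hstg _] := run.
elim: k => [|k IH] kK; first by rewrite w0E.
have [_ _ [_ [le_w _]]] := Hstg k.+1 isT kK.
by move: le_w; rewrite /phi_of (fvalE hprop (IH (ltnW kK))) -EFinD => /edom_le.
Qed.

Lemma restart_potential xs phis : phi_of f h xs = phis%:E -> forall k, (k <= K)%N ->
  B k * (f (w k) + fval h (w k) - phis) + 1 / 2 * dot (z k - xs) (z k - xs)
    <= 1 / 2 * dot (w0 - xs) (w0 - xs).
Proof.
move=> phi_xs; have [[z0 _ B0] Brec Hstg _] := run.
elim=> [|k IH] kK; first by rewrite z0 B0 mul0r add0r.
have [_ BS ztE] := Brec k.+1 isT (leqW kK).
have [[_ _ crit_k _ [wtE uE etaE]] zS [_ [_ le_wt]]] := Hstg k.+1 isT kK.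
have sub_crit : restart_crit f h lam (zt k.+1) (wt k.+1) (u k.+1) (eta k.+1).
  by rewrite wtE uE etaE.
rewrite /= in BS ztE zS.
have [Bk0 [b0 b2]] := restart_b_spec (ltnW kK).
have [e [_ e0 dwt sub crit]] := restart_crit_fin hprop lam0 sub_crit.
have dxs : edom h xs by apply: (@edom_le _ _ h (f xs) phis); rewrite -phi_xs.
have dwk := restart_dom_w (ltnW kK); have dwk1 := restart_dom_w kK.
have phisE : f xs + fval h xs = phis.
  by move: phi_xs; rewrite /phi_of (fvalE hprop dxs) -EFinD => -[].
apply: le_trans (IH (ltnW kK)); rewrite BS.
apply: (restart_potential_decrease (lam := lam) (eta := e) (w := w k) (wt := wt k.+1)
  (zt := zt k.+1) (u := u k.+1) (Pt := f (wt k.+1) + fval h (wt k.+1))) => //.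
- have B1 : B k.+1 != 0 by rewrite BS gt_eqF // ltr_wpDl.
  by apply/rowP => i; rewrite ztE -BS !mxE; field.
- by rewrite -phisE; exact: sub.
- exact: sub.
- by move: le_wt; rewrite /phi_of (fvalE hprop dwk1) (fvalE hprop dwt) -!EFinD lee_fin.
- apply: le_trans crit _; rewrite ler_piMl ?dot_ge0 //; lra.
Qed.

Lemma restart_outer_count (phis epsb : R) : 0 < epsb ->
  (exists xs, phi_of f h xs = phis%:E) -> (forall x, (phis%:E <= phi_of f h x)%E) ->
  (forall k, (k <= K)%N -> ((phis + epsb)%:E < phi_of f h (w k))%E) ->
  K%:R ^+ 2 * lam * epsb <= 2 * dist_to (minimizers (phi_of f h)) w0 ^+ 2.
Proof.
move=> eps0 [xs phi_xs] phis_min gap.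
have min_xs : minimizers (phi_of f h) xs by move=> x; rewrite phi_xs.
have c0 : 0 <= K%:R ^+ 2 * lam * epsb / 2.
  by have := mulr_ge0 (mulr_ge0 (sqr_ge0 (K%:R : R)) (ltW lam0)) (ltW eps0); lra.
suff : K%:R ^+ 2 * lam * epsb / 2 <= dist_to (minimizers (phi_of f h)) w0 ^+ 2 by lra.
apply: dist_to_sqr_ge => //; first by exists xs.
move=> y min_y; have phi_y : phi_of f h y = phis%:E.
  by apply/eqP; rewrite eq_le phis_min andbT -phi_xs min_y.
have := restart_potential phi_y (leqnn K); have := restart_B_growth (leqW (leqnn K)).
have := gap K (leqnn K); rewrite /phi_of (fvalE hprop (restart_dom_w (leqnn K))) -EFinD lte_fin.
have := dot_ge0 (z K - y); rewrite vnorm2.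
set P := f (w K) + fval h (w K) => Z0 gapK BK pot.
have lb0 : 0 <= K%:R ^+ 2 * lam / 4 by have := mulr_ge0 (sqr_ge0 (K%:R : R)) (ltW lam0); lra.
have : K%:R ^+ 2 * lam / 4 * epsb <= B K * (P - phis).
  by apply: ler_pM => //; [exact: ltW | lra].
lra.
Qed.

Hypotheses (L0 : 0 < L) (fconv : rconvex f) (fsm : L_smooth f gf L) (hconv : econvex h)
  (lamL : 1 <= lam * L).

Lemma stage_iters_le_sqrt (j : nat) (zt0 : vec) (s0 : acg_seq R n) :
  stage_partial f gf h L lam zt0 s0 j -> j%:R <= 6 * Num.sqrt lam * Num.sqrt L.
Proof.
move=> [tr no_crit]; have j2 := stage_count L0 fconv fsm hprop hconv lam0 tr no_crit lamL.
rewrite -ler_sqr ?nnegrE ?mulr_ge0 ?sqrtr_ge0 // !exprMn !sqr_sqrtr ?(ltW lam0) ?(ltW L0) //.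
lra.
Qed.

Lemma restart_total_iters :
  ((\sum_(1 <= k < K.+1) m k + J)%N%:R : R) <= (K%:R + 1) * (6 * Num.sqrt lam * Num.sqrt L).
Proof.
have [_ _ Hstg partial] := run.
have stage_le k : (1 <= k < K.+1)%N -> (m k)%:R <= 6 * Num.sqrt lam * Num.sqrt L.
  move=> /andP [k1 kK]; have [[tr _ _ no_crit _] _ _] := Hstg k k1 kK.
  by apply: (stage_iters_le_sqrt (zt0 := zt k) (s0 := s k)); split.
rewrite natrD natr_sum mulrDl mul1r; apply: lerD; last exact: stage_iters_le_sqrt partial.
apply: le_trans (ler_sum_nat stage_le) _.
by set T := 6 * _ * _; rewrite sumr_const_nat subn1 /= mulr_natl.
Qed.
End Restart.

Lemma restart_count_arith (R : realType) (L lam epsb d : R) (K N : nat) :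
  0 < L -> 0 < lam -> 0 < epsb -> 0 <= d ->
  N%:R <= (K%:R + 1) * (6 * Num.sqrt lam * Num.sqrt L) ->
  K%:R ^+ 2 * lam * epsb <= 2 * d ^+ 2 -> lam <= d ^+ 2 / epsb ->
  N%:R <= 15%:R * Num.sqrt L * d / Num.sqrt epsb.
Proof.
move=> L0 lam0 eps0 d0 N_le K_le lam_le.
have se0 : 0 < Num.sqrt epsb by rewrite sqrtr_gt0.
have [sl0 sL0] : 0 <= Num.sqrt lam /\ 0 <= Num.sqrt L by split; exact: sqrtr_ge0.
have Kd : K%:R * Num.sqrt lam * Num.sqrt epsb <= 3 / 2 * d.
  have d32 : 0 <= 3 / 2 * d by lra.
  have Kse : 0 <= K%:R * Num.sqrt lam * Num.sqrt epsb by rewrite !mulr_ge0 // ltW.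
  rewrite -ler_sqr ?nnegrE //.
  rewrite !exprMn !sqr_sqrtr ?(ltW lam0) ?(ltW eps0) //; have := sqr_ge0 d; lra.
have ld : Num.sqrt lam * Num.sqrt epsb <= d.
  rewrite -ler_sqr ?nnegrE ?mulr_ge0 ?(ltW se0) // exprMn !sqr_sqrtr ?(ltW lam0) ?(ltW eps0) //.
  by move: lam_le; rewrite ler_pdivlMr.
rewrite ler_pdivlMr //; apply: le_trans (ler_wpM2r (ltW se0) N_le) _.
have -> : (K%:R + 1) * (6 * Num.sqrt lam * Num.sqrt L) * Num.sqrt epsb
    = 6 * Num.sqrt L * (K%:R * Num.sqrt lam * Num.sqrt epsb + Num.sqrt lam * Num.sqrt epsb) by ring.
have : 0 <= 6 * Num.sqrt L by rewrite mulr_ge0.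
nra.
Qed.

Theorem theorem2p9 :
  exists C : nat,
  forall (R : realType) (n : nat) (f : 'rV[R]_n -> R) (gf : 'rV[R]_n -> 'rV[R]_n)
    (L : R) (h : 'rV[R]_n -> \bar R) (phis : R) (w0 : 'rV[R]_n) (epsb lam : R)
    (z w zt wt u : nat -> 'rV[R]_n) (b B : nat -> R) (eta : nat -> \bar R)
    (m : nat -> nat) (s : nat -> acg_seq R n) (K J : nat),
    0 < L ->
    rconvex f -> L_smooth f gf L ->
    eproper h -> eclosed h -> econvex h ->
    (exists xs, phi_of f h xs = phis%:E) ->
    (forall x, (phis%:E <= phi_of f h x)%E) ->
    edom h w0 ->
    0 < epsb ->
    1 / L <= lam ->
    lam <= dist_to (minimizers (phi_of f h)) w0 ^+ 2 / epsb ->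
    restart_prefix f gf h L lam w0 z w zt wt u b B eta m s K J ->
    (forall k, (k <= K)%N -> ((phis + epsb)%:E < phi_of f h (w k))%E) ->
    ((\sum_(1 <= k < K.+1) m k + J)%N%:R : R)
      <= C%:R * Num.sqrt L * dist_to (minimizers (phi_of f h)) w0 / Num.sqrt epsb.
Proof.
exists 15%N => R n f gf L h phis w0 epsb lam z w zt wt u b B eta m s K J
  L0 fconv fsm hprop _ hconv min_ex phis_min dw0 eps0 lamL lam_d run gap.
(* Closedness of h only ensures that the ACG steps exist; the run is given here. *)
have lam0 : 0 < lam by apply: lt_le_trans lamL; rewrite divr_gt0.
have lamL1 : 1 <= lam * L by move: lamL; rewrite ler_pdivrMr // mulrC.
have [xs phi_xs] := min_ex.
apply: (restart_count_arith L0 lam0 eps0 _ _ _ lam_d).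
- by apply: dist_to_ge0; exists xs => x; rewrite phi_xs.
- exact: (restart_total_iters hprop lam0 run L0 fconv fsm hconv lamL1).
- exact: (restart_outer_count hprop lam0 dw0 run eps0 min_ex phis_min gap).
Qed.
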